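(* Let $\Gamma=(N,A,u)$ be a finite normal form game with $N=\{1,\dots,n\}$, $n\ge2$, in which every player has the same strategy set $X$, so $A=X^n$. The following are equivalent: (i) $\Gamma$ is fully symmetric, i.e. $u_i=u_{\pi(i)}\circ\pi$ for every $i\in N$ and every $\pi\in S_N$; (ii) $\Gamma$ is standard symmetric and weakly anonymous; (iii) for each $i\in N$ and $\pi\in S_N$, $u_{\pi(i)}=u_i\circ\pi^{-1}$; (iv) for each $i\in N$ and each transposition $\tau\in T_N$, $u_i=u_{\tau(i)}\circ\tau$; (v) for each $i\in N$ and each transposition $\tau\in T_N$, $u_i=u_{\tau(i)}\circ\tau^{-1}$.
   Context: A finite normal form game $\Gamma=(N,A,u)$ consists of players $N$, non-empty finite strategy sets $A_i$, profiles $A=\times_{i\in N}A_i$ and utilities $u_i:A\to\mathbb{R}$. For $\pi\in S_N$ and $s\in A$ write $\pi(s)=(s_{\pi^{-1}(i)})_{i\in N}$, and for a function $f:A\to\mathbb{R}$, $f\circ\pi$ denotes $s\mapsto f(\pi(s))$. $T_N$ is the set of transpositions in $S_N$. $\Gamma$ is standard symmetric if there is a transitive subgroup $H\le S_N$ such that $u_i=u_{\pi(i)}\circ\pi$ for all $i\in N$ and $\pi\in H$. $\Gamma$ is weakly anonymous if for each $i\in N$ and each permutation $\pi\in S_N$ fixing $i$, $u_i=u_i\circ\pi$. *)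

From HB Require Import structures.
From mathcomp Require Import all_boot all_order all_algebra all_fingroup.
From mathcomp Require Import reals.
Set Implicit Arguments. Unset Strict Implicit. Unset Printing Implicit Defensive.

Definition profile (n : nat) (X : finType) := {ffun 'I_n -> X}.

Definition pact n (X : finType) (pi : {perm 'I_n}) (s : profile n X) : profile n X :=
  [ffun i => s (pi^-1 i)%g].

Definition compp n (X : finType) (R : Type) (f : profile n X -> R) (pi : {perm 'I_n}) :
  profile n X -> R := fun s => f (pact pi s).

Section Game.
Variables (R : realType) (n : nat) (X : finType) (u : 'I_n -> profile n X -> R).

Definition is_transposition (t : {perm 'I_n}) : Prop :=
  exists i j : 'I_n, i != j /\ t = tperm i j.

Definition fully_symmetric : Prop :=
  forall (i : 'I_n) (pi : {perm 'I_n}), u i = compp (u (pi i)) pi.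

Definition transitive_subgroup (H : {group {perm 'I_n}}) : Prop :=
  forall i j : 'I_n, exists2 pi, pi \in H & pi i = j.

Definition standard_symmetric : Prop :=
  exists H : {group {perm 'I_n}}, transitive_subgroup H /\
    forall (i : 'I_n) (pi : {perm 'I_n}), pi \in H -> u i = compp (u (pi i)) pi.

Definition weakly_anonymous : Prop :=
  forall (i : 'I_n) (pi : {perm 'I_n}), pi i = i -> u i = compp (u i) pi.
End Game.

From mathcomp Require Import all_boot all_order all_algebra all_fingroup.
From mathcomp Require Import boolp reals.

(* The permutations p with u_i = u_{p(i)} o p for every i are closed under
   composition, so full symmetry follows from symmetry under a generating set:
   the transpositions, or a transitive subgroup together with all stabilizers
   (every p factors as a stabilizer of i followed by an element of H). *)

Lemma pact1 n (X : finType) (s : profile n X) : pact 1%g s = s.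
Proof. by apply/ffunP => k; rewrite !ffunE invg1 perm1. Qed.

Lemma pactM n (X : finType) (p q : {perm 'I_n}) (s : profile n X) :
  pact (p * q)%g s = pact q (pact p s).
Proof. by apply/ffunP => k; rewrite !ffunE invMg permM. Qed.

Lemma compp1 n (X : finType) (R : Type) (f : profile n X -> R) : compp f 1%g = f.
Proof. by apply: funext => s; rewrite /compp pact1. Qed.

Lemma comppM n (X : finType) (R : Type) (f : profile n X -> R) (p q : {perm 'I_n}) :
  compp f (p * q)%g = compp (compp f q) p.
Proof. by apply: funext => s; rewrite /compp pactM. Qed.

Lemma transposition_inv n (t : {perm 'I_n}) : is_transposition t -> (t^-1)%g = t.
Proof. by case=> i [j [_ ->]]; rewrite tpermV. Qed.

Section Symmetry.
Variables (R : realType) (n : nat) (X : finType) (u : 'I_n -> profile n X -> R).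

Definition symmetric_at (i : 'I_n) (p : {perm 'I_n}) : Prop :=
  u i = compp (u (p i)) p.

Lemma symmetric_at1 i : symmetric_at i 1%g.
Proof. by rewrite /symmetric_at perm1 compp1. Qed.

Lemma symmetric_atM i p q :
  symmetric_at i p -> symmetric_at (p i) q -> symmetric_at i (p * q)%g.
Proof. by rewrite /symmetric_at permM comppM => Hp <-. Qed.

Lemma fully_symmetric_invP :
  fully_symmetric u <->
  forall i (p : {perm 'I_n}), u (p i) = compp (u i) (p^-1)%g.
Proof.
split=> H i p.
  by have := H (p i) (p^-1)%g; rewrite permK.
by have := H (p i) (p^-1)%g; rewrite permK invgK.
Qed.

Lemma fully_symmetric_tpermP :
  fully_symmetric u <->
  forall i (t : {perm 'I_n}), is_transposition t -> symmetric_at i t.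
Proof.
split=> [H i t _ | H i p]; first exact: H.
have [ts -> tsP] := prod_tpermP p.
elim: ts tsP i => [|t ts IH] /= tsP i; first by rewrite big_nil; apply: symmetric_at1.
case/andP: tsP => tP tsP; rewrite big_cons.
by apply: symmetric_atM; [apply: H; exists t.1, t.2 | apply: IH].
Qed.

Lemma fully_symmetric_stabilizerP :
  fully_symmetric u <-> standard_symmetric u /\ weakly_anonymous u.
Proof.
split=> [H | [[G [G_trans G_sym]] anon] i p].
  split=> [|i p p_i]; last by have := H i p; rewrite p_i.
  exists [set: {perm 'I_n}]%G; split=> [i j | i p _]; last exact: H.
  by exists (tperm i j); rewrite ?inE ?tpermL.
have [h hG h_i] := G_trans i (p i).
have fix_i : (p * h^-1)%g i = i by rewrite permM -h_i permK.
rewrite -(mulgKV h p).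
apply: symmetric_atM; rewrite /symmetric_at fix_i; [exact: anon | exact: G_sym].
Qed.

End Symmetry.

Theorem theorem3p15 (R : realType) (n : nat) (X : finType)
    (u : 'I_n -> profile n X -> R) :
  (2 <= n)%N ->
  [/\ (fully_symmetric u <-> standard_symmetric u /\ weakly_anonymous u),
      (fully_symmetric u <->
         forall (i : 'I_n) (pi : {perm 'I_n}), u (pi i) = compp (u i) (pi^-1)%g),
      (fully_symmetric u <->
         forall (i : 'I_n) (t : {perm 'I_n}), is_transposition t ->
           u i = compp (u (t i)) t) &
      (fully_symmetric u <->
         forall (i : 'I_n) (t : {perm 'I_n}), is_transposition t ->
           u i = compp (u (t i)) (t^-1)%g)].
Proof.
(* The equivalences hold for every n. *)
move=> _; split.
- exact: fully_symmetric_stabilizerP.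
- exact: fully_symmetric_invP.
- exact: fully_symmetric_tpermP.
- rewrite fully_symmetric_tpermP.
  by split=> H i t tP; have := H i t tP; rewrite transposition_inv.
Qed.
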